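(* Let $q$ be a query program, $P$ a partial model, $\mathcal{T}$ a theory, and $P',\mathcal{T}'$ the partial model and theory produced by the witness-generation construction. If $M\in\mathit{solutions}(P',\mathcal{T}')$, then $M\in\mathit{solutions}(P,\mathcal{T})$.
   Context: Linear systems. Fix a large finite reserve $\mathcal{X}$ of integer variables. A system of linear inequalities $\mathcal{S}$ is a finite set of inequalities $\sum_j a_{ij}x_j\le y_i$ (equations are written as pairs of inequalities). A valuation $k:\mathcal{X}\to\mathbb{Z}$ is a solution of $\mathcal{S}$ ($k\vDash\mathcal{S}$) if it satisfies all of them; $\mathcal{S}_1\vDash\mathcal{S}_2$ means every solution of $\mathcal{S}_1$ is a solution of $\mathcal{S}_2$. Models. A metamodel is a signature $\Sigma$ of unary class symbols, binary relation symbols, a unary existence symbol $\varepsilon$ and a binary equality symbol $\sim$. A (scoped) partial model $P=\langle O_P,I_P,\mathcal{S}_P\rangle$ consists of a finite object set $O_P$, a 3-valued interpretation $I_P(\sigma):O_P^{\mathrm{arity}(\sigma)}\to\{0,1,\tfrac12\}$ for each $\sigma\in\Sigma$ ($\tfrac12$ = unknown), and a scope $\mathcal{S}_P$ (a system of linear inequalities). $P$ is concrete if all values are $0$ or $1$, $I_P(\varepsilon)(o)=1$ for all $o$, $I_P(\sim)(o_1,o_2)=1$ iff $o_1=o_2$, and $\mathcal{S}_P$ has a solution. Refinement: for $\mathit{abs}:O_Q\to O_P$, $P\succcurlyeq_{\mathit{abs}}Q$ holds if for all $\sigma$ and tuples $\bar q$, $I_P(\sigma)(\mathit{abs}(\bar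 q))$ is $\tfrac12$ or equals $I_Q(\sigma)(\bar q)$; every $p$ with $I_P(\varepsilon)(p)=1$ has a preimage under $\mathit{abs}$; and $\mathcal{S}_Q\vDash\mathcal{S}_P$. $P\succcurlyeq Q$ if $P\succcurlyeq_{\mathit{abs}}Q$ for some $\mathit{abs}$. For a first-order predicate $\varphi$ over $\Sigma$ with free variables $v_1,\dots,v_n$ and a concrete model $M$, $M\#\varphi$ is the number of maps $Z:\{v_1,\dots,v_n\}\to O_M$ under which $\varphi$ is true in $M$. A theory $\mathcal{T}=\langle\Phi,r\rangle$ is a finite set $\Phi$ of predicates with a map $r:\Phi\to\mathcal{X}$; a concrete $M$ is compatible with it ($M\vDash\mathcal{T}$) if $\mathcal{S}_M\vDash r(\varphi)=M\#\varphi$ for all $\varphi\in\Phi$. $\mathit{solutions}(P,\mathcal{T})$ is the set of concrete models $M$ with $P\succcurlyeq M$ and $M\vDash\mathcal{T}$. Program and IPET. $q$ is a query program generated from a graph-query search plan (nested for-loops implementing extend constraints and if-statements implementing check constraints). $\mathit{BB}$ is its set of basic blocks; its weighted CFG is $\langle V,E,s,t,w,\mathit{tr}\rangle$ with edges $E\subseteq V\times V$, start/end $s,t$, weights $w:E\to\mathbb{N}$, traceability $\mathit{tr}:V\to\mathit{BB}$. $f:E\to\mathcal{X}$ assigns distinct variables to edges. $\mathcal{S}_{\mathrm{IPET}}$ contains $\sum_{e=\langle s,n\rangle}f(e)=1$, $\sum_{e=\langle n,t\rangle}f(e)=1$, flow conservation at every $n\ne s,t$, $-f(e)\le0$, and possibly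 further low-level flow facts. Basic block predicates. For $bb\in\mathit{BB}$, $\psi_{bb}$ is the conjunction of the atomic predicates of all for/if statements enclosing $bb$ (extend atoms without their existential quantifier; check literals as-is); $\psi_{bb}=\mathrm{true}$ if none. If $bb$ is the header of loop $\ell$, also $\psi'_{bb}=\psi_{bb}\wedge(\text{atom of }\ell)$. $\Psi$ is the set of all these predicates. Witness generation. Given $P=\langle O_P,I_P,\mathcal{S}_P\rangle$ and $\mathcal{T}=\langle\Phi,r\rangle$ (with the range of $f$ disjoint from the range of $r$ and from the variables of $\mathcal{S}_P$), extend $r$ to $r'$ on $\Phi\cup\Psi$ by assigning to each $\psi\in\Psi$ a fresh distinct variable (not in the range of $f$, of $r$, or in $\mathcal{S}_P$). $\mathcal{S}_{\mathrm{merge}}$ contains for each $bb$: $r'(\psi_{bb})+r'(\psi'_{bb})-\sum_{e=\langle n_1,n_2\rangle\in E,\mathit{tr}(n_1)=bb}f(e)=0$ if $bb$ is a loop header, else $r'(\psi_{bb})-\sum_{e=\langle n_1,n_2\rangle\in E,\mathit{tr}(n_1)=bb}f(e)=0$. Set $P'=\langle O_P,I_P,\mathcal{S}_P\cup\mathcal{S}_{\mathrm{IPET}}\cup\mathcal{S}_{\mathrm{merge}}\rangle$ and $\mathcal{T}'=\langle\Phi\cup\Psi,r'\rangle$. *)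

From Stdlib Require List.
From mathcomp Require Import all_boot all_algebra.
Set Implicit Arguments. Unset Strict Implicit. Unset Printing Implicit Defensive.
Import GRing.Theory Num.Theory.
Local Open Scope ring_scope.

Section Linear.
Variable X : finType.

Definition valuation := X -> int.
Definition linexp := X -> int.
Record ineq := Ineq { coef : linexp ; bnd : int }.
Definition system := seq ineq.

Definition sat_ineq (k : valuation) (c : ineq) : bool :=
  \sum_(x : X) coef c x * k x <= bnd c.
Definition solves (k : valuation) (S : system) : Prop := all (sat_ineq k) S.
Definition entails (S1 S2 : system) : Prop :=
  forall k, solves k S1 -> solves k S2.
Definition has_solution (S : system) : Prop := exists k, solves k S.

Definition vars (S : system) (x : X) : bool := has (fun c => coef c x != 0) S.

Definition lin0 : linexp := fun _ => 0.
Definition svar (x : X) : linexp := fun y => ((y == x) : nat)%:Z.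
Definition lin_add (a b : linexp) : linexp := fun y => a y + b y.
Definition lin_opp (a : linexp) : linexp := fun y => - a y.
Definition lin_sub (a b : linexp) : linexp := lin_add a (lin_opp b).
Definition eqn (a : linexp) (b : int) : system :=
  [:: Ineq a b; Ineq (lin_opp a) (- b)].
End Linear.

Inductive tv := T0 | T1 | Th.   (* 0, 1, 1/2 *)
Definition tv1 (v : tv) : bool := if v is T1 then true else false.

Section Models.
(* class symbols C, relation symbols R; epsilon and ~ are built in *)
Variables (C R : Type) (X : finType).

Record pmodel := PModel {
  obj : finType;
  Icls : C -> obj -> tv;
  Irel : R -> obj -> obj -> tv;
  Ieps : obj -> tv;
  Ieq : obj -> obj -> tv;
  scope : system X }.

Definition concrete (M : pmodel) : Prop :=
  [/\ (forall c o, @Icls M c o <> Th),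
      (forall r o1 o2, @Irel M r o1 o2 <> Th),
      (forall o, @Ieps M o = T1),
      (forall o1 o2, @Ieq M o1 o2 = if o1 == o2 then T1 else T0)
    & has_solution (scope M)].

Definition refines_by (P Q : pmodel) (abs : obj Q -> obj P) : Prop :=
  [/\ ((forall c q, @Icls P c (abs q) = Th \/ @Icls P c (abs q) = @Icls Q c q) /\
      (forall r q1 q2, @Irel P r (abs q1) (abs q2) = Th \/
                       @Irel P r (abs q1) (abs q2) = @Irel Q r q1 q2)),
      (forall q, @Ieps P (abs q) = Th \/ @Ieps P (abs q) = @Ieps Q q),
      (forall q1 q2, @Ieq P (abs q1) (abs q2) = Th \/
                     @Ieq P (abs q1) (abs q2) = @Ieq Q q1 q2),
      (forall p, @Ieps P p = T1 -> exists q, abs q = p)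
    & entails (scope Q) (scope P)].

Definition refines (P Q : pmodel) : Prop := exists abs, @refines_by P Q abs.

Inductive fm :=
  | FTrue | FFalse
  | FCls of C & nat
  | FRel of R & nat & nat
  | FEps of nat
  | FEq of nat & nat
  | FNot of fm
  | FAnd of fm & fm
  | FOr of fm & fm
  | FEx of nat & fm
  | FAll of nat & fm.

Definition upd (T : Type) (env : nat -> option T) (v : nat) (o : T) :=
  fun x => if x == v then Some o else env x.

Fixpoint evalf (M : pmodel) (env : nat -> option (obj M)) (phi : fm)
  {struct phi} : bool :=
  match phi with
  | FTrue => true
  | FFalse => false
  | FCls c v => if env v is Some o then tv1 (@Icls M c o) else false
  | FRel r v w =>
      match env v, env w with
      | Some o1, Some o2 => tv1 (@Irel M r o1 o2) | _, _ => false end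
  | FEps v => if env v is Some o then tv1 (@Ieps M o) else false
  | FEq v w =>
      match env v, env w with
      | Some o1, Some o2 => tv1 (@Ieq M o1 o2) | _, _ => false end
  | FNot p => ~~ evalf env p
  | FAnd p q => evalf env p && evalf env q
  | FOr p q => evalf env p || evalf env q
  | FEx v p => [exists o : obj M, evalf (upd env v o) p]
  | FAll v p => [forall o : obj M, evalf (upd env v o) p]
  end.

Fixpoint fv (phi : fm) : seq nat :=
  match phi with
  | FTrue | FFalse => [::]
  | FCls _ v | FEps v => [:: v]
  | FRel _ v w | FEq v w => [:: v; w]
  | FNot p => fv p
  | FAnd p q | FOr p q => fv p ++ fv q
  | FEx v p | FAll v p => [seq x <- fv p | x != v]
  end.

(* M # phi : number of maps Z : fv(phi) -> O_M making phi true
   (maps from the list of distinct free variables = tuples) *)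
Definition count_fm (M : pmodel) (phi : fm) : nat :=
  let vs := undup (fv phi) in
  #|[pred t : (size vs).-tuple (obj M) |
      evalf (fun v => if v \in vs then onth t (index v vs) else None) phi]|.

Record theory := Theory { Phi : seq fm ; rmap : fm -> X }.

Definition compat (M : pmodel) (T : theory) : Prop :=
  forall phi, List.In phi (Phi T) ->
    forall k, solves k (scope M) -> k (rmap T phi) = (count_fm M phi)%:Z.

Definition solutions (P : pmodel) (T : theory) (M : pmodel) : Prop :=
  [/\ concrete M, refines P M & compat M T].

(* Query programs (abstracted to their basic blocks), weighted CFG.    *)
Record qprog := QProg {
  BB : finType;
  encl : BB -> seq fm;          (* atoms of the for/if statements enclosing bb *)
  header : BB -> option fm }.   (* Some a iff bb is the header of loop with atom a *)

Definition psi (q : qprog) (bb : BB q) : fm := foldr FAnd FTrue (encl bb).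
Definition psi' (q : qprog) (bb : BB q) (a : fm) : fm := FAnd (psi bb) a.

Definition Psi_list (q : qprog) : seq fm :=
  flatten [seq psi bb :: (if header bb is Some a then [:: psi' bb a] else [::])
          | bb <- enum (BB q)].

Record wcfg (q : qprog) := WCfg {
  V : finType;
  E : {set V * V};
  src : V;
  snk : V;
  weight : V * V -> nat;
  tr : V -> BB q }.

Section IPET.
Variables (q : qprog) (G : wcfg q) (f : V G * V G -> X).

(* coefficient vector of  sum_{e in E, P e} f(e) *)
Definition esum (P : pred (V G * V G)) : linexp X :=
  fun x => (#|[set e in E G | P e && (f e == x)]|)%:Z.

Definition S_IPET (facts : system X) : system X :=
  eqn (esum (fun e => e.1 == src G)) 1
  ++ eqn (esum (fun e => e.2 == snk G)) 1
  ++ flatten [seq eqn (lin_sub (esum (fun e => e.2 == n))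
                               (esum (fun e => e.1 == n))) 0
             | n <- enum (V G) & (n != src G) && (n != snk G)]
  ++ [seq Ineq (lin_opp (svar (f e))) 0 | e <- enum (E G)]
  ++ facts.

Definition S_merge (r' : fm -> X) : system X :=
  flatten [seq eqn (lin_sub
                      (lin_add (svar (r' (psi bb)))
                               (if header bb is Some a
                                then svar (r' (psi' bb a)) else @lin0 X))
                      (esum (fun e => @tr q G e.1 == bb))) 0
          | bb <- enum (BB q)].

Definition witness_hyps (P : pmodel) (T : theory) (r' : fm -> X) : Prop :=
  [/\
      (forall e1 e2, e1 \in E G -> e2 \in E G -> f e1 = f e2 -> e1 = e2),
      (forall e, e \in E G ->
         (forall phi, List.In phi (Phi T) -> f e <> rmap T phi)
         /\ ~~ vars (scope P) (f e)),
      (forall phi, List.In phi (Phi T) -> r' phi = rmap T phi),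
      (forall ps, List.In ps (Psi_list q) -> ~ List.In ps (Phi T) ->
         [/\ (forall e, e \in E G -> r' ps <> f e),
             (forall phi, List.In phi (Phi T) -> r' ps <> rmap T phi)
           & ~~ vars (scope P) (r' ps)])
    &
      (forall ps1 ps2, List.In ps1 (Psi_list q) -> List.In ps2 (Psi_list q) ->
         ~ List.In ps1 (Phi T) -> ~ List.In ps2 (Phi T) ->
         ps1 <> ps2 -> r' ps1 <> r' ps2)].

Definition witness_model (P : pmodel) (facts : system X) (r' : fm -> X)
  : pmodel :=
  @PModel (obj P) (@Icls P) (@Irel P) (@Ieps P) (@Ieq P)
          (scope P ++ S_IPET facts ++ S_merge r').

Definition witness_theory (T : theory) (r' : fm -> X) : theory :=
  Theory (Phi T ++ Psi_list q) r'.
End IPET.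
End Models.

(* Witness generation only strengthens the partial model and the theory: the
   scope of P' is that of P plus the IPET and merge constraints, and T' keeps
   every predicate of T with the same variable (r' extends r).  Dropping
   constraints preserves refinement, and dropping predicates preserves
   compatibility, so every solution of (P', T') is one of (P, T). *)
From mathcomp Require Import all_boot all_algebra.

Set Implicit Arguments.
Unset Strict Implicit.
Unset Printing Implicit Defensive.

Lemma entails_catl (X : finType) (S1 S2 : system X) : entails (S1 ++ S2) S1.
Proof. by move=> k; rewrite /solves all_cat => /andP[]. Qed.

Section Weakening.
Variables (C R : Type) (X : finType).

Definition with_scope (P : pmodel C R X) (S : system X) : pmodel C R X :=
  @PModel C R X (obj P) (@Icls _ _ _ P) (@Irel _ _ _ P) (@Ieps _ _ _ P)
    (@Ieq _ _ _ P) S.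

Lemma refines_by_with_scope (P Q : pmodel C R X) (S : system X)
    (abs : obj Q -> obj P) :
  entails S (scope P) -> refines_by (P := with_scope P S) abs -> refines_by abs.
Proof.
by move=> SP [? ? ? ? QS]; split=> // k /QS /SP.
Qed.

Lemma refines_with_scope (P Q : pmodel C R X) (S : system X) :
  entails S (scope P) -> refines (with_scope P S) Q -> refines P Q.
Proof. by move=> SP [abs Habs]; exists abs; exact: refines_by_with_scope Habs. Qed.

Definition subtheory (T T' : theory C R X) : Prop :=
  forall phi, List.In phi (Phi T) ->
    List.In phi (Phi T') /\ rmap T' phi = rmap T phi.

Lemma compat_subtheory (M : pmodel C R X) (T T' : theory C R X) :
  subtheory T T' -> compat M T' -> compat M T.
Proof.
by move=> TT' MT' phi /TT'[inT' <-]; exact: MT' phi inT'.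
Qed.

Lemma solutions_weaken (P : pmodel C R X) (S : system X) (T T' : theory C R X)
    (M : pmodel C R X) :
  entails S (scope P) -> subtheory T T' ->
  solutions (with_scope P S) T' M -> solutions P T M.
Proof.
move=> SP TT' [Mc PM MT']; split=> //.
- exact: refines_with_scope PM.
- exact: compat_subtheory MT'.
Qed.

Lemma witness_subtheory (q : qprog C R) (T : theory C R X) (r' : fm C R -> X) :
  (forall phi, List.In phi (Phi T) -> r' phi = rmap T phi) ->
  subtheory T (witness_theory q T r').
Proof. by move=> r'E phi inT; split; [apply: List.in_or_app; left | exact: r'E]. Qed.

End Weakening.

Theorem lemmaA2 (C R : Type) (X : finType)
  (P : pmodel C R X) (T : theory C R X)
  (q : qprog C R) (G : wcfg q) (f : V G * V G -> X)
  (facts : system X) (r' : fm C R -> X) (M : pmodel C R X) :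
  witness_hyps f P T r' ->
  solutions (witness_model f P facts r') (witness_theory q T r') M ->
  solutions P T M.
Proof.
move=> [_ _ r'E _ _]; apply: solutions_weaken.
- exact: entails_catl.
- exact: witness_subtheory.
Qed.
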